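(* Fix $\nu$. Assume (R) and the growth-of-sum-moment condition (M), and that $T\ge p$ and $p=o(T)$ if $0\le\eta\le1/2$, respectively $p^{2\eta}=o(T)$ if $\eta>1/2$. Then \[ \widehat{MSPE}_T=\frac1T\sum_{t=1}^T|\mathbf x_t^\top\widehat{\boldsymbol\beta}_{T\nu}-\mathbf x_t^\top\boldsymbol\beta_\nu|^2=O_{\mathbb P}\Big(\frac pT\Big). \]
   Context: Setting: $p=p_T$ may grow with $T$; limits as $T,p\to\infty$. Regressors $\mathbf x_t\in\mathbb R^p$, responses with $Y_t^{(\nu)}=\mathbf x_t^\top\boldsymbol\beta_\nu+\epsilon_t^{(\nu)}$, $t=1,\dots,T$. $\mathbb P,\mathbb E$ conditional on the regressors. $\mathbb X_T=(\mathbf x_1,\dots,\mathbf x_T)^\top$ full rank, $\mathbf Y_T^{(\nu)}=(Y_1^{(\nu)},\dots,Y_T^{(\nu)})^\top$, $\widehat{\boldsymbol\beta}_{T\nu}=(\mathbb X_T^\top\mathbb X_T)^{-1}\mathbb X_T^\top\mathbf Y_T^{(\nu)}$. (R): regressors bounded; there exist positive definite $\Sigma_{\mathbf x}$, $\eta\ge0$, $C<\infty$ and a compact interval $A\subset(0,\infty)$, independent of $T,p$, with $\|T^{-1}\sum_t\mathbf x_t\mathbf x_t^\top-\Sigma_{\mathbf x}\|_2\le Cp^\eta/\sqrt T$ and $\operatorname{spec}(T^{-1}\mathbb X_T^\top\mathbb X_T)\subset A$. (M): there are $C_\nu<\infty$, $\gamma'\ge2$ with $\sup_{j\ge1}\mathbb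 E|\sum_{t=1}^Nx_{tj}\epsilon_t^{(\nu)}|^\gamma\le C_\nu N^{\gamma/2}$ for all $2\le\gamma\le\gamma'$, $N\in\mathbb N$. *)

From HB Require Import structures.
From mathcomp Require Import all_boot all_order all_algebra.
From mathcomp Require Import all_classical all_reals all_analysis.
Set Implicit Arguments. Unset Strict Implicit. Unset Printing Implicit Defensive.
Import Order.TTheory GRing.Theory Num.Theory.
Local Open Scope ring_scope.
Local Open Scope classical_set_scope.

Definition euclid_norm (R : realType) (n : nat) (v : 'cV[R]_n) : R :=
  Num.sqrt (\sum_(i < n) v i 0 ^+ 2).

Definition opnorm2 (R : realType) (m n : nat) (A : 'M[R]_(m, n)) : R :=
  sup [set euclid_norm (A *m v) | v in [set v : 'cV[R]_n | euclid_norm v <= 1]].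

Definition posdef (R : realType) (n : nat) (S : 'M[R]_n) : Prop :=
  S^T = S /\ forall v : 'cV[R]_n, v != 0 -> 0 < (v^T *m S *m v) 0 0.

(* Design matrix X_T = (x_1,...,x_T)^T with x_t = (x_{t1},...,x_{tp})
   (0-based indices). *)
Definition design (R : realType) (x : nat -> nat -> R) (T p : nat) : 'M[R]_(T, p) :=
  \matrix_(t < T, j < p) x t j.

Definition lead_block (R : realType) (S : nat -> nat -> R) (p : nat) : 'M[R]_p :=
  \matrix_(i < p, j < p) S i j.

Definition err_vec (R : realType) (O : Type) (eps : nat -> O -> R) (T : nat) (w : O)
  : 'cV[R]_T := \col_(t < T) eps t w.

Definition ols (R : realType) (T p : nat) (X : 'M[R]_(T, p)) (Y : 'cV[R]_T) : 'cV[R]_p :=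
  invmx (X^T *m X) *m X^T *m Y.

Definition mspe (R : realType) (O : Type) (x : nat -> nat -> R) (p : nat -> nat)
  (beta : forall T : nat, 'cV[R]_(p T)) (eps : nat -> O -> R) (T : nat) (w : O) : R :=
  let X := design x T (p T) in
  let bhat := ols X (X *m beta T + err_vec eps T w) in
  (T%:R)^-1 * \sum_(t < T) ((X *m bhat) t 0 - (X *m beta T) t 0) ^+ 2.

Definition OP_bound d (O : measurableType d) (R : realType) (P : probability O R)
  (Z : nat -> O -> R) (r : nat -> R) : Prop :=
  forall e : R, 0 < e -> exists M : R, 0 < M /\
    exists N : nat, forall n, (N <= n)%N ->
      (P [set w | (M * r n < `|Z n w|)%R] <= e%:E)%E.

(* Let G = X^T X and H = X G^-1 X^T, so that T * MSPE = |H eps|^2. With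
   z = G^-1 X^T eps we have |X z|^2 = <z, X^T eps> <= |z| |X^T eps|, while the
   lower eigenvalue bound a on G / T gives a T |z|^2 <= |X z|^2; hence
   MSPE <= |X^T eps|^2 / (a T^2). By (M) with exponent 2 every coordinate of
   X^T eps has second moment at most C_nu T, so E[MSPE] <= C_nu p / (a T), and
   Markov's inequality gives the O_P(p/T) bound.
   The eigenvalue bound is turned into a bound on the quadratic form without the
   spectral theorem: the supremum l of the c with c |v|^2 <= v^T A v for all v
   is an eigenvalue of A, since otherwise A - l I would be positive
   semidefinite and invertible, hence coercive, contradicting maximality. *)

From HB Require Import structures.
From mathcomp Require Import all_boot all_order all_algebra.
From mathcomp Require Import all_classical all_reals all_analysis.
From mathcomp Require Import measurable_realfun.
From mathcomp Require Import ring lra.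
Import Order.TTheory GRing.Theory Num.Theory.
Local Open Scope ring_scope.
Local Open Scope classical_set_scope.
Set Implicit Arguments. Unset Strict Implicit. Unset Printing Implicit Defensive.

Definition qform (R : pzRingType) n (M : 'M[R]_n) (u v : 'cV[R]_n) : R :=
  (u^T *m M *m v) 0 0.

Notation sqnorm v := (qform 1%:M v v).

Section QuadraticForm.
Variables (R : realFieldType) (n : nat).
Implicit Types (M : 'M[R]_n) (u v w : 'cV[R]_n).

Lemma qformE M u v : qform M u v = \sum_i \sum_j u i 0 * M i j * v j 0.
Proof.
rewrite /qform mxE exchange_big /=; apply: eq_bigr => j _.
by rewrite mxE mulr_suml; apply: eq_bigr => i _; rewrite mxE.
Qed.

Lemma qform1E u v : qform 1%:M u v = \sum_i u i 0 * v i 0.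
Proof. by rewrite /qform mulmx1 mxE; apply: eq_bigr => i _; rewrite mxE. Qed.

Lemma qform_sym M u v : M^T = M -> qform M u v = qform M v u.
Proof.
move=> sM; have trmx11 (A : 'M[R]_1) : A 0 0 = A^T 0 0 by rewrite mxE.
by rewrite /qform trmx11 !trmx_mul trmxK sM mulmxA.
Qed.

Lemma qformDl M u1 u2 v : qform M (u1 + u2) v = qform M u1 v + qform M u2 v.
Proof. by rewrite /qform linearD /= !mulmxDl mxE. Qed.

Lemma qformDr M u v1 v2 : qform M u (v1 + v2) = qform M u v1 + qform M u v2.
Proof. by rewrite /qform !mulmxDr mxE. Qed.

Lemma qformZl M s u v : qform M (s *: u) v = s * qform M u v.
Proof. by rewrite /qform linearZ /= -!scalemxAl mxE. Qed.

Lemma qformZr M s u v : qform M u (s *: v) = s * qform M u v.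
Proof. by rewrite /qform -!scalemxAr mxE. Qed.

Lemma qformZ M s u v : qform (s *: M) u v = s * qform M u v.
Proof. by rewrite /qform -scalemxAr -scalemxAl mxE. Qed.

Lemma qformBscalar M c u v : qform (M - c%:M) u v = qform M u v - c * qform 1%:M u v.
Proof. by rewrite /qform mulmxBr mulmxBl mul_mx_scalar -scalemxAl mulmx1 !mxE. Qed.

Lemma sqnorm_ge0 v : 0 <= sqnorm v.
Proof. by rewrite qform1E; apply: sumr_ge0 => i _; rewrite -expr2 sqr_ge0. Qed.

Lemma sqr_coord_le_sqnorm v i : v i 0 ^+ 2 <= sqnorm v.
Proof.
rewrite qform1E (bigD1 i) //= -expr2 lerDl.
by apply: sumr_ge0 => j _; rewrite -expr2 sqr_ge0.
Qed.

Lemma norm_coordM_le_sqnorm v i j : `|v i 0 * v j 0| <= sqnorm v.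
Proof.
have := sqr_coord_le_sqnorm v i; have := sqr_coord_le_sqnorm v j.
rewrite -[v i 0 ^+ 2]real_normK ?num_real // -[v j 0 ^+ 2]real_normK ?num_real //.
rewrite normrM; have := sqr_ge0 (`|v i 0| - `|v j 0|); nra.
Qed.

Lemma norm_qform_le M v : `|qform M v v| <= (\sum_i \sum_j `|M i j|) * sqnorm v.
Proof.
rewrite qformE mulr_suml; apply: le_trans (ler_norm_sum _ _ _) _.
apply: ler_sum => i _; rewrite mulr_suml; apply: le_trans (ler_norm_sum _ _ _) _.
apply: ler_sum => j _; rewrite mulrAC normrM [_ * sqnorm v]mulrC normrM -normrM.
by rewrite ler_wpM2r // norm_coordM_le_sqnorm.
Qed.

End QuadraticForm.

Lemma quadratic_ge0_discr (R : realFieldType) (al be ga : R) : 0 <= ga ->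
  (forall s, 0 <= al + 2 * be * s + ga * s ^+ 2) -> be ^+ 2 <= al * ga.
Proof.
move=> ga_ge0 q_ge0; have [ga_gt0|] := ltrP 0 ga.
  have := q_ge0 (- be / ga).
  suff -> : al + 2 * be * (- be / ga) + ga * (- be / ga) ^+ 2 = (al * ga - be ^+ 2) / ga.
    by rewrite pmulr_lge0 ?invr_gt0 // subr_ge0.
  by field; rewrite gt_eqF.
move=> ga_le0; have ga0 : ga = 0 by apply/eqP; rewrite eq_le ga_le0 ga_ge0.
rewrite {}ga0 in q_ge0 *.
have [-> | be_neq0] := eqVneq be 0; first by rewrite expr0n mulr0.
have := q_ge0 (- (`|al| + 1) / (2 * be)).
have -> : al + 2 * be * (- (`|al| + 1) / (2 * be)) + 0 * (- (`|al| + 1) / (2 * be)) ^+ 2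
    = al - (`|al| + 1) by field.
by have := ler_norm al; lra.
Qed.

Lemma qform_CauchySchwarz (R : realFieldType) n (M : 'M[R]_n) u v :
  M^T = M -> (forall w, 0 <= qform M w w) ->
  qform M u v ^+ 2 <= qform M u u * qform M v v.
Proof.
move=> sM psdM; apply: quadratic_ge0_discr => [|s]; first exact: psdM.
have := psdM (u + s *: v).
rewrite qformDl !qformDr !qformZl !qformZr (qform_sym v u sM).
by congr (0 <= _); ring.
Qed.

Lemma eigenvalue_unitmx (F : fieldType) n (A : 'M[F]_n) l :
  eigenvalue A l = (A - l%:M \notin unitmx).
Proof. by rewrite /eigenvalue /eigenspace kermx_eq0 row_free_unit. Qed.

Lemma unitmx_eigenvalue_gt (R : realFieldType) n (A : 'M[R]_n) a :
  0 < a -> (forall l, eigenvalue A l -> a <= l) -> A \in unitmx.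
Proof.
move=> a_gt0 eigA; apply: contraT => A_nunit.
have : eigenvalue A 0 by rewrite eigenvalue_unitmx raddf0 subr0.
by move/eigA; rewrite leNgt a_gt0.
Qed.

Lemma psd_unitmx_coercive (R : realFieldType) n (M : 'M[R]_n) :
  M^T = M -> (forall w, 0 <= qform M w w) -> M \in unitmx ->
  exists2 delta, 0 < delta & forall w, delta * sqnorm w <= qform M w w.
Proof.
move=> sM psdM M_unit; set Mi := invmx M.
pose K := \sum_i \sum_j `|Mi i j| + 1.
have K_gt0 : 0 < K.
  by rewrite ltr_wpDl // sumr_ge0 // => i _; rewrite sumr_ge0.
exists K^-1; first by rewrite invr_gt0.
(* |w|^2 = <w, M u> for u = M^-1 w, so Cauchy-Schwarz for the form of M bounds
   |w|^4 by q_M(w) q_(M^-1)(w) <= q_M(w) K |w|^2. *)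
move=> w; set u := Mi *m w.
have wMu : sqnorm w = qform M w u by rewrite /qform mulmx1 -mulmxA mulKVmx.
have uMu : qform M u u = qform Mi w w.
  by rewrite /qform -mulmxA mulKVmx // trmx_mul trmx_inv sM.
have Mi_le : qform Mi w w <= K * sqnorm w.
  apply: le_trans (ler_norm _) (le_trans (norm_qform_le _ _) _).
  by rewrite ler_wpM2r ?sqnorm_ge0 ?lerDl.
have := qform_CauchySchwarz w u sM psdM; rewrite -wMu uMu => CS.
have [w_gt0|] := ltrP 0 (sqnorm w).
  rewrite ler_pdivrMl // mulrC -(ler_pM2r w_gt0) -expr2 (le_trans CS) //.
  by rewrite -mulrA ler_wpM2l.
move=> w_le0; have -> : sqnorm w = 0 by apply/eqP; rewrite eq_le w_le0 sqnorm_ge0.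
by rewrite mulr0 psdM.
Qed.

Lemma sqnorm_const1 (R : realFieldType) n : sqnorm (const_mx 1 : 'cV[R]_n) = n%:R.
Proof.
rewrite qform1E (eq_bigr (fun=> 1)) => [|i _]; first by rewrite sumr_const card_ord.
by rewrite mxE mulr1.
Qed.

Lemma eigenvalue_lb_qform (R : realType) n (A : 'M[R]_n) a :
  A^T = A -> (forall l, eigenvalue A l -> a <= l) ->
  forall v, a * sqnorm v <= qform A v v.
Proof.
case: n A => [A _ _ v|n A sA eigA]; first by rewrite qform1E qformE !big_ord0 mulr0.
pose K := \sum_i \sum_j `|A i j|.
pose S := [set c : R | forall w, c * sqnorm w <= qform A w w].
have S_K : S (- K).
  by move=> w; rewrite mulNr lerNl (le_trans _ (norm_qform_le _ _)) // -normrN ler_norm.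
have S_ub c : S c -> c * n.+1%:R <= K * n.+1%:R.
  move=> /(_ (const_mx 1)); rewrite sqnorm_const1 => /le_trans; apply.
  by rewrite -sqnorm_const1 (le_trans (ler_norm _)) // norm_qform_le.
have S_sup : has_sup S.
  by split; [exists (- K) | exists K => c /S_ub; rewrite ler_pM2r ?ltr0n].
pose l := sup S.
have S_l : S l.
  move=> w; have [w_gt0|w_le0] := ltrP 0 (sqnorm w).
    rewrite -ler_pdivlMr //; apply: ge_sup; first by exists (- K).
    by move=> c S_c; rewrite ler_pdivlMr.
  have w0 : sqnorm w = 0 by apply/eqP; rewrite eq_le w_le0 sqnorm_ge0.
  by have := S_K w; rewrite w0 !mulr0.
suff a_le_l : a <= l by move=> v; rewrite (le_trans _ (S_l v)) // ler_wpM2r ?sqnorm_ge0.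
apply: eigA; rewrite eigenvalue_unitmx; apply/negP => unitB.
have [|w|delta delta_gt0 coerB] := psd_unitmx_coercive _ _ unitB.
- by rewrite linearB /= tr_scalar_mx sA.
- by rewrite qformBscalar subr_ge0 S_l.
have S_ldelta : S (l + delta).
  by move=> w; have := coerB w; rewrite qformBscalar mulrDl; lra.
by have := sup_upper_bound S_sup S_ldelta; rewrite -/l; lra.
Qed.

Lemma qform_gram (R : realFieldType) m n (X : 'M[R]_(m, n)) u v :
  qform (X^T *m X) u v = qform 1%:M (X *m u) (X *m v).
Proof. by rewrite /qform mulmx1 trmx_mul !mulmxA. Qed.

Lemma gram_eigenvalue_lb (R : realType) m n (X : 'M[R]_(m, n)) s a : 0 < s ->
  (forall l, eigenvalue (s^-1 *: (X^T *m X)) l -> a <= l) ->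
  forall v, a * s * sqnorm v <= sqnorm (X *m v).
Proof.
move=> s_gt0 eigG v; have sG : (s^-1 *: (X^T *m X))^T = s^-1 *: (X^T *m X).
  by rewrite linearZ /= trmx_mul trmxK.
have := eigenvalue_lb_qform sG eigG v; rewrite qformZ qform_gram.
by rewrite mulrAC ler_pdivlMl // mulrC.
Qed.

Lemma gram_unitmx (R : realFieldType) m n (X : 'M[R]_(m, n)) s a : 0 < s -> 0 < a ->
  (forall l, eigenvalue (s^-1 *: (X^T *m X)) l -> a <= l) -> X^T *m X \in unitmx.
Proof.
move=> s_gt0 a_gt0 eigG.
rewrite -(unitmxZ _ (_ : s^-1 \is a GRing.unit)) ?unitfE ?invr_neq0 ?gt_eqF //.
exact: unitmx_eigenvalue_gt a_gt0 eigG.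
Qed.

Section LeastSquares.
Variables (R : realType) (T n : nat) (X : 'M[R]_(T, n)).
Hypothesis gram_unit : X^T *m X \in unitmx.

Definition hatmx : 'M[R]_T := X *m invmx (X^T *m X) *m X^T.

Lemma ols_fit_sub b e : X *m ols X (X *m b + e) - X *m b = hatmx *m e.
Proof.
rewrite /ols mulmxDr mulmxA -(mulmxA (invmx _) X^T X) mulVmx // mul1mx.
by rewrite mulmxDr addrC addKr /hatmx !mulmxA.
Qed.

Lemma sqnorm_hatmx_le c e : 0 < c -> (forall v, c * sqnorm v <= sqnorm (X *m v)) ->
  sqnorm (hatmx *m e) <= c^-1 * sqnorm (X^T *m e).
Proof.
move=> c_gt0 coerX; set y := X^T *m e; set z := invmx (X^T *m X) *m y.
have -> : hatmx *m e = X *m z by rewrite /hatmx -!mulmxA.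
have fit_zy : sqnorm (X *m z) = qform 1%:M z y.
  by rewrite -qform_gram /qform mulmx1 -mulmxA mulKVmx.
have CS : qform 1%:M z y ^+ 2 <= sqnorm z * sqnorm y.
  by apply: qform_CauchySchwarz; [rewrite tr_scalar_mx | exact: sqnorm_ge0].
have z_le : sqnorm z <= c^-1 * sqnorm (X *m z) by rewrite ler_pdivlMl.
rewrite -fit_zy in CS; have [fit_gt0|fit_le0] := ltrP 0 (sqnorm (X *m z)).
  rewrite -(ler_pM2r fit_gt0) -expr2 (le_trans CS) // mulrAC.
  by rewrite ler_wpM2r ?sqnorm_ge0.
by rewrite (le_trans fit_le0) // mulr_ge0 ?invr_ge0 ?sqnorm_ge0 ?ltW.
Qed.

End LeastSquares.

Section Markov.
Variables (d : measure_display) (O : measurableType d) (R : realType).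
Variable P : probability O R.

Lemma markov_nonneg (f : O -> R) (c m : R) : 0 < c ->
  measurable_fun setT f -> (forall w, 0 <= f w) ->
  (\int[P]_w (f w)%:E <= m%:E)%E -> (P [set w | (c < f w)%R] <= (m / c)%:E)%E.
Proof.
move=> c_gt0 mf f_ge0 Ef_le.
have mEf : measurable_fun setT (EFin \o f) by apply/measurable_EFinP.
have mf_itv (i : interval R) : measurable (f @^-1` [set` i]).
  by rewrite -[_ @^-1` _]setTI; apply: (mf measurableT); exact: measurable_itv.
have := le_integral_comp_abse P measurableT (f := id) (@measurable_id _ _ _)
  (fun r (r_ge0 : (0 <= r)%E) => r_ge0) (fun _ _ _ _ le_rs => le_rs) mEf c_gt0.
have -> : setT `&` [set w | (c%:E <= `|(EFin \o f) w|)%E] = f @^-1` `[c, +oo[.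
  by apply/seteqP; split => w /=; rewrite in_itv /= andbT lee_fin ger0_norm //; case.
rewrite (eq_integral (fun w => (f w)%:E)) => [/= cP_le|w _]; last first.
  by rewrite abse_EFin ger0_norm.
have -> : [set w | (c < f w)%R] = f @^-1` `]c, +oo[.
  by apply/seteqP; split => w /=; rewrite in_itv /= andbT.
apply: (@le_trans _ _ (P (f @^-1` `[c, +oo[%classic))).
  by apply: le_measure; rewrite ?inE // => w /=; rewrite !in_itv /= !andbT => /ltW.
by rewrite EFinM lee_pdivlMr // muleC (le_trans cP_le).
Qed.

Lemma expectation_norm_powR2 (f : O -> R) :
  ('E_P[fun w => (`|f w| `^ 2)%R] = \int[P]_w (f w ^+ 2)%:E)%E.
Proof.
rewrite expectation.unlock; apply: eq_integral => w _.
by rewrite (@powR_mulrn _ _ 2) // real_normK // num_real.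
Qed.

End Markov.

Section Mspe.
Variables (R : realType) (O : Type) (x : nat -> nat -> R) (p : nat -> nat).
Variables (beta : forall T, 'cV[R]_(p T)) (eps : nat -> O -> R).

Lemma mspeE T w : let X := design x T (p T) in X^T *m X \in unitmx ->
  mspe x beta eps T w = T%:R^-1 * sqnorm (hatmx X *m err_vec eps T w).
Proof.
move=> X unitG; rewrite /mspe /= -(ols_fit_sub unitG (beta T)) qform1E; congr (_ * _).
by apply: eq_bigr => t _; rewrite !mxE expr2.
Qed.

Lemma mspe_le T a w : (0 < T)%N -> 0 < a ->
  (forall l, eigenvalue (T%:R^-1 *: ((design x T (p T))^T *m design x T (p T))) l -> a <= l) ->
  mspe x beta eps T w <= (a * T%:R * T%:R)^-1 * sqnorm ((design x T (p T))^T *m err_vec eps T w).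
Proof.
move=> T_gt0 a_gt0 eigG; have T_gt0' : 0 < T%:R :> R by rewrite ltr0n.
have unitG := gram_unitmx T_gt0' a_gt0 eigG.
rewrite mspeE // invfM [_^-1 * T%:R^-1]mulrC -mulrA ler_pM2l ?invr_gt0 //.
by apply: sqnorm_hatmx_le (gram_eigenvalue_lb T_gt0' eigG) => //; exact: mulr_gt0.
Qed.

End Mspe.

Section RegressionTail.
Variables (d : measure_display) (O : measurableType d) (R : realType).
Variables (P : probability O R) (eps : nat -> {RV P >-> R}).
Local Notation err T w := (err_vec (fun t => eps t) T w).

Lemma mulmx_err_vecE m T (A : 'M[R]_(m, T)) i w :
  (A *m err T w) i 0 = \sum_(t < T) A i t * eps t w.
Proof. by rewrite mxE; apply: eq_bigr => t _; rewrite mxE. Qed.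

Lemma measurable_mulmx_err m T (A : 'M[R]_(m, T)) i :
  measurable_fun setT (fun w => (A *m err T w) i 0).
Proof.
under eq_fun do rewrite mulmx_err_vecE.
by apply: measurable_sum => t; apply: measurable_funM => //; exact: measurable_funPT.
Qed.

Lemma measurable_sqnorm_mulmx_err m T (A : 'M[R]_(m, T)) :
  measurable_fun setT (fun w => sqnorm (A *m err T w)).
Proof.
under eq_fun do rewrite qform1E.
by apply: measurable_sum => i; apply: measurable_funM; exact: measurable_mulmx_err.
Qed.

Lemma integral_sqnorm_mulmx_err_le m T (A : 'M[R]_(m, T)) c :
  (forall i, \int[P]_w (((A *m err T w) i 0) ^+ 2)%:E <= c%:E)%E ->
  (\int[P]_w (sqnorm (A *m err T w))%:E <= (m%:R * c)%:E)%E.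
Proof.
move=> coord_le; under eq_integral do rewrite qform1E -sumEFin.
rewrite ge0_integral_sum // => [|i|i w _]; last by rewrite lee_fin -expr2 sqr_ge0.
  apply: (@le_trans _ _ (\sum_(i < m) c%:E)%E).
    by apply: lee_sum => i _; under eq_integral do rewrite -expr2; exact: coord_le.
  by rewrite sumEFin sumr_const card_ord mulr_natl.
by apply/measurable_EFinP; apply: measurable_funM; exact: measurable_mulmx_err.
Qed.

Variables (x : nat -> nat -> R) (p : nat -> nat) (beta : forall T, 'cV[R]_(p T)).

Section Design.
Variable T : nat.
Local Notation X := (design x T (p T)).
Local Notation Z := (mspe x beta (fun t => eps t) T).
Variables (a Cnu : R).
Hypotheses (T_gt0 : (0 < T)%N) (a_gt0 : 0 < a).
Hypothesis eigG : forall l, eigenvalue (T%:R^-1 *: (X^T *m X)) l -> a <= l.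
Hypothesis moment2 : forall j,
  (\int[P]_w ((\sum_(t < T) x t j * eps t w) ^+ 2)%:E <= (Cnu * T%:R)%:E)%E.

Let T_gt0' : 0 < T%:R :> R. Proof. by rewrite ltr0n. Qed.

Lemma mspe_ge0 w : 0 <= Z w.
Proof. by rewrite /mspe mulr_ge0 ?invr_ge0 // sumr_ge0 // => t _; rewrite sqr_ge0. Qed.

Lemma measurable_mspe : measurable_fun setT Z.
Proof.
rewrite (_ : Z = fun w => T%:R^-1 * sqnorm (hatmx X *m err T w)).
  exact/measurable_funM/measurable_sqnorm_mulmx_err.
by apply/funext => w; rewrite mspeE // (gram_unitmx T_gt0' a_gt0 eigG).
Qed.

Lemma integral_mspe_le :
  (\int[P]_w (Z w)%:E <= ((a * T%:R * T%:R)^-1 * ((p T)%:R * (Cnu * T%:R)))%:E)%E.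
Proof.
set k := (a * T%:R * T%:R)^-1; have k_ge0 : 0 <= k by rewrite invr_ge0 !mulr_ge0 ?ltW.
have mY := measurable_sqnorm_mulmx_err X^T.
apply: (@le_trans _ _ (\int[P]_w (k * sqnorm (X^T *m err T w))%:E)%E).
  apply: ge0_le_integral => //.
  - by move=> w _; rewrite lee_fin mspe_ge0.
  - exact/measurable_EFinP/measurable_mspe.
  - exact/measurable_EFinP/measurable_funM.
  - by move=> w _; rewrite lee_fin mspe_le.
under eq_integral do rewrite EFinM.
rewrite ge0_integralZl ?lee_fin ?EFinM ?lee_wpmul2l //.
- apply: integral_sqnorm_mulmx_err_le => j; under eq_integral do rewrite mulmx_err_vecE.
  by under eq_integral do under eq_bigr do rewrite !mxE; exact: moment2.
- exact/measurable_EFinP.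
- by move=> w _; rewrite lee_fin sqnorm_ge0.
Qed.

Lemma mspe_tail_le M : 0 < M ->
  (P [set w | (M * ((p T)%:R / T%:R) < `|Z w|)%R] <= (`|Cnu| / (a * M))%:E)%E.
Proof.
move=> M_gt0; set c := M * ((p T)%:R / T%:R).
have -> : [set w | (c < `|Z w|)%R] = [set w | (c < Z w)%R].
  by apply/seteqP; split => w /=; rewrite ger0_norm ?mspe_ge0.
have [n0|n_gt0] := posnP (p T).
  have sqnorm0 w : sqnorm (X^T *m err T w) = 0.
    by move: (X^T *m err T w); rewrite n0 => v; rewrite qform1E big_ord0.
  rewrite /c n0 mul0r mulr0 (_ : [set w | _] = set0) ?measure0 ?lee_fin.
    by rewrite divr_ge0 // mulr_ge0 // ltW.
  apply/seteqP; split => w //=.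
  by rewrite ltNge (le_trans (mspe_le beta _ w T_gt0 a_gt0 eigG)) // sqnorm0 mulr0.
have c_gt0 : 0 < c by rewrite mulr_gt0 ?divr_gt0 ?ltr0n.
apply: le_trans (markov_nonneg c_gt0 measurable_mspe mspe_ge0 integral_mspe_le) _.
have -> : (a * T%:R * T%:R)^-1 * ((p T)%:R * (Cnu * T%:R)) / c = Cnu / (a * M).
  by rewrite /c; field; rewrite !gt_eqF ?ltr0n.
by rewrite lee_fin ler_pM2r ?invr_gt0 ?mulr_gt0 ?ler_norm.
Qed.

End Design.

End RegressionTail.

Theorem corollary2 (d : measure_display) (O : measurableType d) (R : realType)
  (P : probability O R)
  (x : nat -> nat -> R) (p : nat -> nat)
  (beta : forall T : nat, 'cV[R]_(p T))
  (eps : nat -> {RV P >-> R})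
  (Sigma : nat -> nat -> R) (eta C a b Cnu gam' : R) :
  (* (R): bounded regressors *)
  (exists K : R, forall t j, `|x t j| <= K) ->
  (forall q, posdef (lead_block Sigma q)) ->
  0 <= eta ->
  (forall T, (0 < T)%N ->
     opnorm2 ((T%:R)^-1 *: ((design x T (p T))^T *m design x T (p T))
              - lead_block Sigma (p T))
       <= C * (p T)%:R `^ eta / Num.sqrt T%:R) ->
  0 < a -> a <= b ->
  (forall T, (0 < T)%N -> forall l : R,
     eigenvalue ((T%:R)^-1 *: ((design x T (p T))^T *m design x T (p T))) l ->
     a <= l <= b) ->
  (* full rank design *)
  (forall T, (0 < T)%N -> \rank (design x T (p T)) = p T) ->
  (* (M) *)
  2 <= gam' ->
  (forall (j N : nat) (g : R), (0 < N)%N -> 2 <= g -> g <= gam' ->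
     ('E_P[fun w => (`| \sum_(t < N) x t j * eps t w | `^ g)%R]
        <= (Cnu * N%:R `^ (g / 2))%:E)%E) ->
  (* dimension conditions *)
  (forall T, (0 < T)%N -> (p T <= T)%N) ->
  (eta <= 1/2 -> (fun T : nat => ((p T)%:R / T%:R : R)) @ \oo --> 0%R) ->
  (1/2 < eta -> (fun T : nat => ((p T)%:R `^ (2 * eta) / T%:R : R)) @ \oo --> 0%R) ->
  OP_bound P (mspe x beta (fun t => eps t)) (fun T => (p T)%:R / T%:R).
Proof.
move=> _ _ _ _ a_gt0 _ eigG _ gam'_ge2 moment _ _ _ e e_gt0.
have Cnu1_gt0 : 0 < `|Cnu| + 1 by rewrite ltr_wpDl.
pose M := (`|Cnu| + 1) / (a * e).
have M_gt0 : 0 < M by rewrite divr_gt0 ?mulr_gt0.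
exists M; split => //; exists 1%N => T T_gt0.
apply: le_trans (mspe_tail_le beta (Cnu := Cnu) T_gt0 a_gt0 _ _ M_gt0) _.
- by move=> l /eigG/andP[].
- move=> j; rewrite -expectation_norm_powR2.
  by have := moment j T 2 T_gt0 (lexx 2) gam'_ge2; rewrite divff // powRr1 ?ler0n.
have -> : `|Cnu| / (a * M) = e * (`|Cnu| / (`|Cnu| + 1)).
  by rewrite /M; field; rewrite !gt_eqF.
by rewrite lee_fin ler_piMr ?ltW // ltr_pdivrMr // mul1r ltrDl.
Qed.
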